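(* Let $(E \xrightarrow{Q} K,\gamma)$ be a projected cone with dual projected cone $(F\xrightarrow{P} N,\delta)$, and let $L := \ker(P)$. Let $\gamma_1,\gamma_2\preceq\gamma$ be faces and $\delta_i := \gamma_i^{*}$. Then the following are equivalent: (i) there is an $L$-invariant separating linear form for $\delta_1$ and $\delta_2$; (ii) $Q(\gamma_1)^{\circ}\cap Q(\gamma_2)^{\circ}\neq\emptyset$.
   Context: Lattices are finitely generated free abelian groups, $E_{\mathbb Q}:=\mathbb Q\otimes E$; cones are convex polyhedral cones, $\tau^\circ$ denotes relative interior, $\preceq$ the face relation, $\sigma^\perp$ and $\sigma^\vee$ the orthogonal space and dual cone in the dual vector space. A projected cone $(E\xrightarrow{Q}K,\gamma)$ is a surjective lattice homomorphism $Q\colon E\to K$ with a simplicial full-dimensional cone $\gamma\subset E_{\mathbb Q}$. Its dual projected cone $(F\xrightarrow{P}N,\delta)$ is defined by $M:=\ker Q$, $F:=\mathrm{Hom}(E,\mathbb Z)$, $N:=\mathrm{Hom}(M,\mathbb Z)$, $P\colon F\to N$ the restriction map, and $\delta:=\gamma^\vee\subset F_{\mathbb Q}$ (so $0\to\mathrm{Hom}(K,\mathbb Z)\to F\xrightarrow{P} N\to 0$ is exact; note $P$ is not the dual of $Q$). For a face $\gamma_0\preceq\gamma$ put $\gamma_0^{*}:=\gamma_0^\perp\cap\delta$ (this is an order-reversing bijection between faces of $\gamma$ and of $\delta$). An $L$-invariant linear form is an element $u\in E=\mathrm{Hom}(F,\mathbb Z)$ with $L\subset u^\perp$. A separating linear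 form for cones $\delta_1,\delta_2$ is a $u$ with $u|_{\delta_1}\ge 0$, $u|_{\delta_2}\le 0$ and $u^\perp\cap\delta_1=u^\perp\cap\delta_2=\delta_1\cap\delta_2$. *)

(* Lattices are modelled by coordinates: E = Z^n (row vectors),
   F = Hom(E,Z) = Z^n via the dual basis, K = Z^k. *)
From mathcomp Require Import all_boot all_order all_algebra.
Set Implicit Arguments. Unset Strict Implicit. Unset Printing Implicit Defensive.
Import Order.TTheory GRing.Theory Num.Theory.
Local Open Scope ring_scope.

Definition vset (n : nat) := 'rV[rat]_n -> Prop.

Definition toQ (m n : nat) (A : 'M[int]_(m, n)) : 'M[rat]_(m, n) :=
  map_mx (fun z : int => z%:~R) A.

(* pairing  F_Q x E_Q -> Q  (dual bases) *)
Definition dot (n : nat) (f x : 'rV[rat]_n) : rat := \sum_(i < n) f 0 i * x 0 i.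

Definition cone_gen (m n : nat) (G : 'M[rat]_(m, n)) : vset n :=
  fun x => exists c : 'rV[rat]_m, (forall i, 0 <= c 0 i) /\ x = c *m G.

Definition simplicial_fulldim (n : nat) (g : vset n) : Prop :=
  exists G : 'M[rat]_n, G \in unitmx /\ forall x, g x <-> cone_gen G x.

Definition dual_cone (n : nat) (s : vset n) : vset n :=
  fun f => forall x, s x -> 0 <= dot f x.
Definition orth (n : nat) (s : vset n) : vset n :=
  fun f => forall x, s x -> dot f x = 0.

Definition is_face (n : nat) (tau sigma : vset n) : Prop :=
  exists w, dual_cone sigma w /\ forall x, tau x <-> (sigma x /\ dot w x = 0).

Definition face_star (n : nat) (gamma g0 : vset n) : vset n :=
  fun f => orth g0 f /\ dual_cone gamma f.

Definition img (n k : nat) (Qm : 'M[int]_(n, k)) (s : vset n) : vset k :=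
  fun y => exists x, s x /\ y = x *m toQ Qm.

Definition lspan (n : nat) (s : vset n) : vset n :=
  fun z => exists (m : nat) (V : 'M[rat]_(m, n)) (c : 'rV[rat]_m),
    (forall i, s (row i V)) /\ z = c *m V.

(* relative interior (interior within the linear span = affine hull of a cone,
   w.r.t. the sup-norm topology) *)
Definition relint (n : nat) (s : vset n) : vset n :=
  fun x => s x /\ exists eps : rat, 0 < eps /\
    forall z, lspan s z -> (forall i, `|z 0 i - x 0 i| < eps) -> s z.

(* L = ker P, P : F -> N = Hom(ker Q, Z) the restriction map *)
Definition kerP (n k : nat) (Qm : 'M[int]_(n, k)) : 'rV[int]_n -> Prop :=
  fun f => forall m : 'rV[int]_n, m *m Qm = 0 -> dot (toQ f) (toQ m) = 0.

(* u in E is L-invariant : L ⊂ u^perp *)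
Definition L_invariant (n k : nat) (Qm : 'M[int]_(n, k)) (u : 'rV[int]_n) : Prop :=
  forall f, kerP Qm f -> dot (toQ f) (toQ u) = 0.

Definition separating (n : nat) (u : 'rV[rat]_n) (d1 d2 : vset n) : Prop :=
  (forall f, d1 f -> 0 <= dot f u) /\ (forall f, d2 f -> dot f u <= 0) /\
  (forall f, (dot f u = 0 /\ d1 f) <-> (d1 f /\ d2 f)) /\
  (forall f, (dot f u = 0 /\ d2 f) <-> (d1 f /\ d2 f)).

From mathcomp Require Import all_boot all_order all_algebra.
From mathcomp Require Import lra.
Set Implicit Arguments. Unset Strict Implicit. Unset Printing Implicit Defensive.
Import Order.TTheory GRing.Theory Num.Theory.
Local Open Scope ring_scope.

(* Write gamma = cone(g_1, ..., g_n) for a basis g of E_Q. A face gamma_j is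
   spanned by the g_i with i in an index set I_j, and in the coordinates
   t_i = <f, g_i> its star delta_j is {t >= 0 | t_i = 0 on I_j}. For
   u = sum_i a_i g_i, the form u separates delta_1 from delta_2 exactly when a
   vanishes outside I_1 ∪ I_2, is positive on I_2 \ I_1 and negative on
   I_1 \ I_2; and u is L-invariant exactly when Q(u) = 0 (clearing denominators
   makes u integral). The points of Q(gamma_j)° are the sums
   sum_{i in I_j} b_i Q(g_i) with all b_i > 0, and the difference of two such
   representations of a common point is such an a with sum_i a_i Q(g_i) = 0;
   conversely such an a splits into two representations of a common point. *)

Lemma dotC n (f x : 'rV[rat]_n) : dot f x = dot x f.
Proof. by rewrite /dot; apply: eq_bigr => j _; rewrite mulrC. Qed.

Lemma dotZr n (f x : 'rV[rat]_n) d : dot f (d *: x) = d * dot f x.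
Proof. by rewrite /dot mulr_sumr; apply: eq_bigr => j _; rewrite mxE mulrCA. Qed.

Lemma dotNr n (f x : 'rV[rat]_n) : dot f (- x) = - dot f x.
Proof. by rewrite -scaleN1r dotZr mulN1r. Qed.

Lemma dot_mulmx n m (f : 'rV[rat]_n) (c : 'rV[rat]_m) (G : 'M[rat]_(m, n)) :
  dot f (c *m G) = \sum_i c 0 i * dot f (row i G).
Proof.
rewrite /dot; under eq_bigr do rewrite mxE mulr_sumr.
rewrite exchange_big; apply: eq_bigr => i _; rewrite mulr_sumr.
by apply: eq_bigr => j _; rewrite !mxE mulrCA.
Qed.

Lemma dot_mulmx_tr n (f a : 'rV[rat]_n) (G : 'M[rat]_n) :
  dot f (a *m G) = dot (f *m G^T) a.
Proof.
rewrite dot_mulmx {2}/dot; apply: eq_bigr => i _.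
by rewrite mulrC mxE; congr (_ * _); apply: eq_bigr => j _; rewrite !mxE.
Qed.

Lemma dot_delta_mx n (i : 'I_n) (a : 'rV[rat]_n) : dot (delta_mx 0 i) a = a 0 i.
Proof.
rewrite /dot (bigD1 i) //= big1 ?addr0; first by rewrite mxE !eqxx mul1r.
by move=> j /negPf ji; rewrite mxE ji andbF mul0r.
Qed.

Lemma dot_toQ n (f x : 'rV[int]_n) :
  dot (toQ f) (toQ x) = (\sum_i f 0 i * x 0 i)%:~R.
Proof. by rewrite rmorph_sum; apply: eq_bigr => i _; rewrite !mxE rmorphM. Qed.

Lemma toQ_mulmx m n p (A : 'M[int]_(m, n)) (B : 'M[int]_(n, p)) :
  toQ (A *m B) = toQ A *m toQ B.
Proof. exact: map_mxM. Qed.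

Lemma toQ_eq0 m n (A : 'M[int]_(m, n)) : (toQ A = 0) <-> (A = 0).
Proof.
split=> [hA | ->]; last by apply/matrixP => i j; rewrite !mxE.
apply/matrixP => i j; move/matrixP/(_ i j): hA.
by rewrite !mxE => /eqP; rewrite intr_eq0 => /eqP.
Qed.

Lemma rat_row_scale_int n (v : 'rV[rat]_n) :
  exists2 d : rat, 0 < d & exists w : 'rV[int]_n, toQ w = d *: v.
Proof.
exists ((\prod_i denq (v 0 i))%:~R); first by rewrite ltr0z prodr_gt0.
exists (\row_i (numq (v 0 i) * \prod_(j | j != i) denq (v 0 j))).
apply/rowP => i; rewrite !mxE intrM numqE [in RHS](bigD1 i) //= rmorphM /=.
by rewrite [RHS]mulrC mulrA.
Qed.

Lemma L_invariant_mulmx0 n k (Qm : 'M[int]_(n, k)) (u : 'rV[int]_n) :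
  L_invariant Qm u <-> u *m Qm = 0.
Proof.
split=> [Lu | uQ f]; last by apply.
apply/rowP => j; rewrite [RHS]mxE; have col_ker : kerP Qm (\row_i Qm i j).
  move=> m mQ; have := congr1 (fun M : 'rV[int]_k => M 0 j) mQ; rewrite !mxE => mQj.
  rewrite dot_toQ; apply/eqP; rewrite intr_eq0 -[X in _ == X]mQj; apply/eqP.
  by apply: eq_bigr => i _; rewrite mxE mulrC.
have := Lu _ col_ker; rewrite dot_toQ => /eqP; rewrite intr_eq0 => /eqP ker_u.
by rewrite -[RHS]ker_u !mxE; apply: eq_bigr => i _; rewrite !mxE mulrC.
Qed.

Definition mask_rv n (I : pred 'I_n) (b : 'rV[rat]_n) : 'rV[rat]_n :=
  \row_i (if I i then b 0 i else 0).

Definition mask_rows n k (I : pred 'I_n) (V : 'M[rat]_(n, k)) : 'M[rat]_(n, k) :=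
  \matrix_(i, j) (if I i then V i j else 0).

Definition open_cone_gen m n (G : 'M[rat]_(m, n)) : vset n :=
  fun x => exists c : 'rV[rat]_m, (forall i, 0 < c 0 i) /\ x = c *m G.

Lemma mulmx_mask_rows n k (I : pred 'I_n) (b : 'rV[rat]_n) (V : 'M[rat]_(n, k)) :
  b *m mask_rows I V = mask_rv I b *m V.
Proof.
apply/rowP => j; rewrite !mxE; apply: eq_bigr => i _; rewrite !mxE.
by case: (I i); rewrite ?mulr0 ?mul0r.
Qed.

Lemma mask_rows_mulmx n k p (I : pred 'I_n) (V : 'M[rat]_(n, k)) (M : 'M[rat]_(k, p)) :
  mask_rows I V *m M = mask_rows I (V *m M).
Proof.
apply/matrixP => i j; rewrite !mxE; under eq_bigr do rewrite mxE.
by case: (I i); rewrite // big1 // => l _; rewrite mul0r.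
Qed.

Lemma open_cone_gen_mask_rows n k (I : pred 'I_n) (V : 'M[rat]_(n, k)) y :
  open_cone_gen (mask_rows I V) y <->
  exists b : 'rV[rat]_n, (forall i, I i -> 0 < b 0 i) /\ y = mask_rv I b *m V.
Proof.
split=> [[c [c0 ->]] | [b [b0 ->]]]; first by exists c; rewrite mulmx_mask_rows.
exists (\row_i if I i then b 0 i else 1); split.
  by move=> i; rewrite mxE; case: ifP => // /b0.
by rewrite mulmx_mask_rows; congr (_ *m V); apply/rowP => i; rewrite !mxE; case: ifP.
Qed.

Lemma le_sum_term (R : numDomainType) (I : finType) (F : I -> R) i :
  (forall j, 0 <= F j) -> F i <= \sum_j F j.
Proof. by move=> F0; rewrite (bigD1 i) //= lerDl sumr_ge0. Qed.

Lemma row_pos_lbound n (b : 'rV[rat]_n) : (forall i, 0 < b 0 i) ->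
  exists2 beta : rat, 0 < beta & forall i, beta <= b 0 i.
Proof.
move=> b0; set S := \sum_i (b 0 i)^-1.
have S0 : 0 <= S by apply: sumr_ge0 => i _; rewrite invr_ge0 ltW.
exists (1 / (1 + S)) => [|i]; first by rewrite divr_gt0 // ltr_wpDr.
rewrite ler_pdivrMr ?ltr_wpDr // -[1](divff (lt0r_neq0 (b0 i))) ler_pM2l //.
rewrite (le_trans (@le_sum_term _ _ (fun j => (b 0 j)^-1) i _)) ?lerDr //.
  by move=> j; rewrite invr_ge0 ltW.
by rewrite divr_ge0 ?ltW.
Qed.

Lemma lspanB_scale n (s : vset n) x x' t : s x -> s x' -> lspan s (x - t *: x').
Proof.
move=> sx sx'; exists (1 + 1)%N, (col_mx x x'), (row_mx 1 (- t%:M)); split.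
  by move=> i; rewrite -[i]splitK; case: (split i) => j; rewrite ?rowKu ?rowKd row_id.
by rewrite mul_row_col mul1mx mulNmx mul_scalar_mx.
Qed.

Lemma lspan_submx m n (s : vset n) (W : 'M[rat]_(m, n))
    (hs : forall y, s y <-> cone_gen W y) z :
  lspan s z -> (z <= W)%MS.
Proof.
case=> p [V [c [sV ->]]]; apply: submx_trans (submxMl c V) _.
by apply/row_subP => i; case/hs: (sV i) => b [_ ->]; exact: submxMl.
Qed.

Lemma submx_small_coords m n (W : 'M[rat]_(m, n)) beta : 0 < beta ->
  exists2 eps : rat, 0 < eps & forall d : 'rV[rat]_n, (d <= W)%MS ->
    (forall j, `|d 0 j| < eps) -> exists2 e : 'rV[rat]_m,
      (forall i, `|e 0 i| < beta) & d = e *m W.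
Proof.
move=> beta0; set P := pinvmx W; set S := \sum_i \sum_j `|P j i|.
have S0 : 0 <= S by apply: sumr_ge0 => i _; apply: sumr_ge0.
have S1 : 0 < 1 + S by rewrite ltr_wpDr.
exists (beta / (1 + S)) => [|d dW dsmall]; first by rewrite divr_gt0.
exists (d *m P) => [i|]; last by rewrite mulmxKpV.
rewrite mxE (le_lt_trans (ler_norm_sum _ _ _)) //.
apply: (@le_lt_trans _ _ (\sum_j beta / (1 + S) * `|P j i|)).
  by apply: ler_sum => j _; rewrite normrM ler_wpM2r // ltW.
rewrite -mulr_sumr mulrAC ltr_pdivrMr // ltr_pM2l //.
have := @le_sum_term _ _ (fun i => \sum_j `|P j i|) i.
by rewrite -/S => /(_ (fun i => sumr_ge0 _ (fun j _ => normr_ge0 _))); lra.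
Qed.

Lemma relint_cone_gen m n (s : vset n) (W : 'M[rat]_(m, n))
    (hs : forall y, s y <-> cone_gen W y) y :
  relint s y <-> open_cone_gen W y.
Proof.
split.
- case=> sy [eps [eps0 near_s]].
  pose s1 : 'rV[rat]_n := const_mx 1 *m W.
  have s1s : s s1 by apply/hs; exists (const_mx 1); split=> // i; rewrite mxE.
  have s1E : s1 = const_mx 1 *m W by []; clearbody s1.
  set T := 1 + \sum_j `|s1 0 j|.
  have T0 : 0 < T by rewrite ltr_wpDr // sumr_ge0.
  set tau := eps / T; have tau0 : 0 < tau by rewrite divr_gt0.
  have : s (y - tau *: s1).
    apply: near_s => [|j]; first exact: lspanB_scale.
    rewrite !mxE addrAC subrr add0r normrN normrM gtr0_norm // /tau mulrAC.
    rewrite ltr_pdivrMr // ltr_pM2l //.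
    by have := @le_sum_term _ _ (fun j => `|s1 0 j|) j (fun j => normr_ge0 _); rewrite /T; lra.
  move=> /hs [c [c0 yc]]; exists (c + tau *: const_mx 1); split.
    by move=> i; rewrite !mxE mulr1 ltr_wpDl.
  by rewrite mulmxDl -scalemxAl -s1E -yc subrK.
- case=> b [b0 ->]; split; first by apply/hs; exists b; split=> // i; exact: ltW.
  have [beta beta0 b_beta] := row_pos_lbound b0.
  have [eps eps0 small] := submx_small_coords W beta0.
  exists eps; split=> // z /(lspan_submx hs) zW z_near.
  have [||e e_beta ze] := small (z - b *m W).
  + by rewrite addmx_sub // -mulNmx submxMl.
  + by move=> j; move: (z_near j); rewrite !mxE.
  apply/hs; exists (b + e); split.
    by move=> i; have := b_beta i; move: (e_beta i); rewrite ltr_norml mxE => /andP[]; lra.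
  by rewrite mulmxDl -ze addrC subrK.
Qed.

Definition coord_star n (I : pred 'I_n) : vset n :=
  fun t => (forall i, 0 <= t 0 i) /\ (forall i, I i -> t 0 i = 0).

Definition sign_pattern n (I1 I2 : pred 'I_n) (a : 'rV[rat]_n) : Prop :=
  forall i, [/\ I1 i -> ~~ I2 i -> a 0 i < 0, I2 i -> ~~ I1 i -> 0 < a 0 i
              & ~~ I1 i -> ~~ I2 i -> a 0 i = 0].

Lemma sign_patternN n (I1 I2 : pred 'I_n) a :
  sign_pattern I1 I2 a -> sign_pattern I2 I1 (- a).
Proof.
by move=> pa i; have [p1 p2 p3] := pa i; split; rewrite mxE;
  [rewrite oppr_lt0; exact: p2 | rewrite oppr_gt0; exact: p1 | move=> *; rewrite p3 ?oppr0].
Qed.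

Lemma sign_patternZ n (I1 I2 : pred 'I_n) d a :
  0 < d -> sign_pattern I1 I2 a -> sign_pattern I1 I2 (d *: a).
Proof.
move=> d0 pa i; have [p1 p2 p3] := pa i; rewrite mxE.
split=> [I1i nI2 | I2i nI1 | nI1 nI2]; first by rewrite pmulr_rlt0 // p1.
  by rewrite pmulr_rgt0 // p2.
by rewrite p3 ?mulr0.
Qed.

Lemma coord_star_delta_mx n (I : pred 'I_n) i : coord_star I (delta_mx 0 i) <-> ~~ I i.
Proof.
split=> [[_ t0] | Ii]; first by apply/negP => /t0; rewrite mxE !eqxx => /eqP; rewrite oner_eq0.
split=> j; first by rewrite mxE ler0n.
by rewrite mxE eqxx /=; case: eqP => // -> Ii'; rewrite Ii' in Ii.
Qed.

Lemma sign_pattern_half n (I1 I2 : pred 'I_n) a t :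
  sign_pattern I1 I2 a -> coord_star I1 t ->
  0 <= dot t a /\ (dot t a = 0 <-> coord_star I2 t).
Proof.
move=> pa [t0 t1].
have terms0 i : 0 <= t 0 i * a 0 i.
  have [p1 p2 p3] := pa i; case: (boolP (I1 i)) => [/t1 -> | nI1]; first by rewrite mul0r.
  case: (boolP (I2 i)) => [I2i | nI2]; last by rewrite p3 ?mulr0.
  by rewrite mulr_ge0 // ltW // p2.
split; first exact: sumr_ge0.
split=> [sum0 | [_ t2]]; last first.
  apply: big1 => i _; have [_ _ p3] := pa i.
  case: (boolP (I2 i)) => [/t2 -> | nI2]; first by rewrite mul0r.
  case: (boolP (I1 i)) => [/t1 -> | nI1]; first by rewrite mul0r.
  by rewrite p3 ?mulr0.
split=> // i I2i; case: (boolP (I1 i)) => [/t1 // | nI1].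
have /eqP := psumr_eq0P (fun i _ => terms0 i) sum0 (i := i) isT.
have [_ p2 _] := pa i.
by rewrite mulf_eq0 => /orP[/eqP // | /eqP a0]; have := p2 I2i nI1; rewrite a0 ltxx.
Qed.

Lemma oppr0_eq0 (V : zmodType) (x : V) : - x = 0 -> x = 0.
Proof. by move/eqP; rewrite oppr_eq0 => /eqP. Qed.

Lemma separatingN n (u : 'rV[rat]_n) d1 d2 :
  separating u d1 d2 -> separating (- u) d2 d1.
Proof.
case=> s1 [s2 [s3 s4]]; split; [|split; [|split]] => f; rewrite dotNr.
- by move/s2; rewrite oppr_ge0.
- by move/s1; rewrite oppr_le0.
- have [to from] := s4 f; split=> [[/oppr0_eq0 fu d2f] | [d2f d1f]].
    by have [] := to (conj fu d2f).
  by rewrite (from (conj d1f d2f)).1 oppr0.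
- have [to from] := s3 f; split=> [[/oppr0_eq0 fu d1f] | [d2f d1f]].
    by have [] := to (conj fu d1f).
  by rewrite (from (conj d1f d2f)).1 oppr0.
Qed.

Section SimplicialCone.

Variables (n : nat) (G : 'M[rat]_n) (gamma : vset n).
Hypothesis Gu : G \in unitmx.
Hypothesis hG : forall x, gamma x <-> cone_gen G x.

Lemma face_simplicial g1 : is_face g1 gamma ->
  exists I : pred 'I_n, forall x, g1 x <-> cone_gen (mask_rows I G) x.
Proof.
case=> w [dw hg1]; exists (fun i => dot w (row i G) == 0) => x; rewrite hg1.
split=> [[/hG [c [c0 ->]] cw0] | [c [c0 ->]]].
  exists c; split=> //; rewrite mulmx_mask_rows; congr (_ *m G); apply/rowP => i.
  rewrite mxE; case: eqP => // wi; rewrite dot_mulmx in cw0.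
  have term0 j : 0 <= c 0 j * dot w (row j G).
    rewrite mulr_ge0 // dw //; apply/hG; exists (delta_mx 0 j).
    by rewrite -rowE; split=> // l; rewrite mxE ler0n.
  have /eqP := psumr_eq0P (fun j _ => term0 j) cw0 (i := i) isT.
  by rewrite mulf_eq0 => /orP[/eqP // | /eqP].
rewrite mulmx_mask_rows; split.
  apply/hG; exists (mask_rv (fun i => dot w (row i G) == 0) c).
  by split=> // i; rewrite mxE; case: ifP.
by rewrite dot_mulmx big1 // => i _; rewrite mxE; case: eqP => [-> | _]; rewrite ?mulr0 ?mul0r.
Qed.

Lemma face_star_coords g1 (I : pred 'I_n)
    (hg1 : forall x, g1 x <-> cone_gen (mask_rows I G) x) f :
  face_star gamma g1 f <-> coord_star I (f *m G^T).
Proof.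
have fGT c : dot f (c *m G) = dot (f *m G^T) c by rewrite dot_mulmx_tr.
split=> [[orth_f dual_f] | [t0 t1]].
  have fG i : (f *m G^T) 0 i = dot f (row i G) by rewrite rowE fGT dotC dot_delta_mx.
  split=> i; rewrite fG.
    apply: dual_f; apply/hG; exists (delta_mx 0 i).
    by rewrite -rowE; split=> // j; rewrite mxE ler0n.
  move=> Ii; apply: orth_f; apply/hg1; exists (delta_mx 0 i).
  split; first by move=> j; rewrite mxE ler0n.
  rewrite mulmx_mask_rows rowE; congr (_ *m G); apply/rowP => j; rewrite !mxE.
  by case: (eqVneq j i) => [-> | _]; [rewrite Ii | case: ifP].
split=> [x /hg1 [c [_ ->]] | x /hG [c [c0 ->]]].
  rewrite mulmx_mask_rows fGT; apply: big1 => i _; rewrite [X in _ * X]mxE.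
  by case: (boolP (I i)) => [/t1 -> | _]; rewrite ?mul0r ?mulr0.
by rewrite fGT; apply: sumr_ge0 => i _; rewrite mulr_ge0.
Qed.

Lemma separating_half (I1 I2 : pred 'I_n) d1 d2
    (hd1 : forall f, d1 f <-> coord_star I1 (f *m G^T))
    (hd2 : forall f, d2 f <-> coord_star I2 (f *m G^T)) a :
  separating (a *m G) d1 d2 -> forall i, ~~ I1 i -> 0 <= a 0 i /\ (I2 i -> 0 < a 0 i).
Proof.
case=> s1 [_ [s3 _]] i nI1.
pose f : 'rV[rat]_n := delta_mx 0 i *m invmx G^T.
have fGT : f *m G^T = delta_mx 0 i by rewrite mulmxKV // unitmx_tr.
have fa : dot f (a *m G) = a 0 i by rewrite dot_mulmx_tr fGT dot_delta_mx.
have d1f : d1 f by apply/hd1; rewrite fGT coord_star_delta_mx.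
have a0 : 0 <= a 0 i by rewrite -fa; apply: s1.
split=> // I2i; rewrite lt_def a0 andbT; apply/eqP => ai0.
have [_ /hd2] := proj1 (s3 f) (conj (etrans fa ai0) d1f).
by rewrite fGT coord_star_delta_mx I2i.
Qed.

Lemma separating_coords (I1 I2 : pred 'I_n) d1 d2
    (hd1 : forall f, d1 f <-> coord_star I1 (f *m G^T))
    (hd2 : forall f, d2 f <-> coord_star I2 (f *m G^T)) a :
  separating (a *m G) d1 d2 <-> sign_pattern I1 I2 a.
Proof.
split=> [sep i | pa].
  have h1 := separating_half hd1 hd2 sep.
  have := separatingN sep; rewrite -mulNmx => /(separating_half hd2 hd1) h2.
  split=> [I1i nI2 | I2i nI1 | nI1 nI2].
  - by have [_ /(_ I1i)] := h2 i nI2; rewrite mxE oppr_gt0.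
  - by have [_ /(_ I2i)] := h1 i nI1.
  have [ai0 _] := h1 i nI1; have [+ _] := h2 i nI2; rewrite mxE oppr_ge0 => nai0.
  by apply/eqP; rewrite eq_le ai0 nai0.
have half1 f : d1 f -> 0 <= dot f (a *m G) /\ (dot f (a *m G) = 0 <-> d2 f).
  by rewrite hd1 hd2 dot_mulmx_tr; exact: sign_pattern_half.
have half2 f : d2 f -> 0 <= - dot f (a *m G) /\ (- dot f (a *m G) = 0 <-> d1 f).
  by rewrite hd1 hd2 dot_mulmx_tr -dotNr; exact: sign_pattern_half (sign_patternN pa).
split; [|split; [|split]] => f.
- by case/half1.
- by case/half2; rewrite oppr_ge0.
- split=> [[f0 d1f] | [d1f d2f]]; split=> //; exact/(half1 f d1f).2.
- split=> [[f0 d2f] | [d1f d2f]]; split=> //.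
    by apply/(half2 f d2f).2; rewrite f0 oppr0.
  by apply: oppr0_eq0; apply/(half2 f d2f).2.
Qed.

End SimplicialCone.

Lemma img_cone_gen m n k (Qm : 'M[int]_(n, k)) (s : vset n) (W : 'M[rat]_(m, n))
    (hs : forall x, s x <-> cone_gen W x) y :
  img Qm s y <-> cone_gen (W *m toQ Qm) y.
Proof.
split=> [[x [/hs [c [c0 ->]] ->]] | [c [c0 ->]]].
  by exists c; rewrite mulmxA.
by exists (c *m W); split; [apply/hs; exists c | rewrite mulmxA].
Qed.

Lemma open_cone_gen_meet n k (I1 I2 : pred 'I_n) (V : 'M[rat]_(n, k)) :
  (exists y, open_cone_gen (mask_rows I1 V) y /\ open_cone_gen (mask_rows I2 V) y) <->
  (exists a, sign_pattern I1 I2 a /\ a *m V = 0).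
Proof.
split=> [[y [/open_cone_gen_mask_rows [b1 [b1p y1]] /open_cone_gen_mask_rows [b2 [b2p y2]]]]
        | [a [pa aV]]].
  exists (mask_rv I2 b2 - mask_rv I1 b1); split; last by rewrite mulmxBl -y1 -y2 subrr.
  move=> i; rewrite !mxE; move: (b1p i) (b2p i).
  case: (I1 i); case: (I2 i) => /= b1i b2i; split=> // _ _;
    by rewrite ?subr0 ?sub0r ?oppr_lt0 ?subrr; auto.
pose b1 : 'rV[rat]_n := \row_i (`|a 0 i| + (I2 i)%:R).
pose b2 : 'rV[rat]_n := mask_rv I1 b1 + a.
have b2E : mask_rv I2 b2 = b2.
  apply/rowP => i; rewrite !mxE; have [p1 _ p3] := pa i.
  case: (boolP (I2 i)) => //= nI2; case: (boolP (I1 i)) => [I1i | nI1]; last by rewrite p3 ?addr0.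
  by rewrite addr0 ltr0_norm ?p1 // addNr.
exists (mask_rv I1 b1 *m V); split; apply/open_cone_gen_mask_rows.
  exists b1; split=> // i I1i; have [p1 _ _] := pa i; rewrite mxE.
  case: (boolP (I2 i)) => [_ | nI2]; first by rewrite ltr_wpDl.
  by rewrite addr0 normr_gt0 ltr0_neq0 ?p1.
exists b2; split; last by rewrite b2E mulmxDl aV addr0.
move=> i I2i; have [_ p2 _] := pa i; rewrite !mxE I2i.
case: (boolP (I1 i)) => [_ | nI1] /=; last by rewrite add0r p2.
by have := ler_norm (- a 0 i); rewrite normrN; lra.
Qed.

Unset Implicit Arguments.
Set Strict Implicit.

Theorem lemma3p3 (n k : nat) (Qm : 'M[int]_(n, k))
  (hQ : forall y : 'rV[int]_k, exists x : 'rV[int]_n, x *m Qm = y)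
  (gamma : vset n) (hgamma : simplicial_fulldim gamma)
  (gamma1 gamma2 : vset n) (h1 : is_face gamma1 gamma) (h2 : is_face gamma2 gamma) :
  (exists u : 'rV[int]_n, L_invariant Qm u /\
     separating (toQ u) (face_star gamma gamma1) (face_star gamma gamma2))
  <->
  (exists y : 'rV[rat]_k, relint (img Qm gamma1) y /\ relint (img Qm gamma2) y).
Proof.
have [G [Gu hG]] := hgamma.
have [I1 hg1] := face_simplicial hG h1; have [I2 hg2] := face_simplicial hG h2.
have sep_coords := separating_coords Gu (face_star_coords hG hg1) (face_star_coords hG hg2).
pose V := G *m toQ Qm.
have relint_img I g (hg : forall x, g x <-> cone_gen (mask_rows I G) x) y :
    relint (img Qm g) y <-> open_cone_gen (mask_rows I V) y.
  by apply: relint_cone_gen => x; rewrite (img_cone_gen _ hg) mask_rows_mulmx.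
apply: (@iff_trans _ (exists a, sign_pattern I1 I2 a /\ a *m V = 0)).
  split=> [[u [/L_invariant_mulmx0 uQ sep]] | [a [pa aV]]].
    exists (toQ u *m invmx G); split; first by apply/sep_coords; rewrite mulmxKV.
    by rewrite mulmxA mulmxKV // -toQ_mulmx uQ; apply/matrixP => i j; rewrite !mxE.
  have [d d0 [w wE]] := rat_row_scale_int (a *m G).
  exists w; split; last by rewrite wE scalemxAl; apply/sep_coords/sign_patternZ.
  apply/L_invariant_mulmx0/toQ_eq0.
  by rewrite toQ_mulmx wE -(scalemxAl d (a *m G)) -mulmxA aV scaler0.
rewrite -open_cone_gen_meet.
by split=> -[y [r1 r2]]; exists y; rewrite !(relint_img _ _ hg1, relint_img _ _ hg2) in r1 r2 *.
Qed.
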